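(* For every $n\ge 2$, the compact set $\widetilde\Gamma_n\subset\mathbb C^n$ is polynomially convex.
   Context: $\mathbb D$ is the open unit disc. $\widetilde{\mathbb G}_n=\{(y_1,\dots,y_{n-1},q)\in\mathbb C^n: q\in\mathbb D,\ y_j=\beta_j+\bar\beta_{n-j}q$ for some $\beta_j\in\mathbb C$ with $|\beta_j|+|\beta_{n-j}|<\binom{n}{j}$, $j=1,\dots,n-1\}$; $\widetilde\Gamma_n$ is its closure. A compact $K\subset\mathbb C^n$ is polynomially convex if for every $y\in\mathbb C^n\setminus K$ there is a polynomial $P$ in $n$ variables with $|P(y)|>\sup_{z\in K}|P(z)|$. *)

From mathcomp Require Import all_boot all_order all_algebra.
From mathcomp Require Import complex.
From mathcomp Require Import reals.
From mathcomp Require Import mpoly.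

Set Implicit Arguments.
Unset Strict Implicit.
Unset Printing Implicit Defensive.

Import Order.TTheory GRing.Theory Num.Theory.
Local Open Scope ring_scope.

(* A point of C^n is a function z : 'I_n -> R[i].
   Coordinates (y_1, ..., y_{n-1}, q): y_j is stored at index j-1,
   q is stored at index n-1. *)

Definition Gtilde (R : realType) (n : nat) (z : 'I_n -> R[i]) : Prop :=
  exists q : R[i],
    (forall i : 'I_n, val i = n.-1 -> z i = q) /\ `|q| < 1 /\
    exists beta : nat -> R[i],
      forall j : nat, (0 < j < n)%N ->
        (forall i : 'I_n, val i = j.-1 ->
            z i = beta j + (beta (n - j)%N)^* * q) /\
        `|beta j| + `|beta (n - j)%N| < ('C(n, j))%:R.

(* Its closure \widetilde{\Gamma}_n in C^n (product topology on C^n,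
   i.e. the max-of-coordinates metric), written out. *)
Definition Gammatilde (R : realType) (n : nat) (z : 'I_n -> R[i]) : Prop :=
  forall eps : R[i], 0 < eps ->
    exists w : 'I_n -> R[i], Gtilde w /\ forall i : 'I_n, `|z i - w i| < eps.

(* Polynomial convexity of K (as in the paper):
   for every y outside K there is a polynomial P in n variables with
   |P(y)| > sup_{z in K} |P(z)|; "sup < |P(y)|" is written as the existence
   of an upper bound c of |P| on K with c < |P(y)|. *)
Definition poly_convex (R : realType) (n : nat) (K : ('I_n -> R[i]) -> Prop) : Prop :=
  forall y : 'I_n -> R[i], ~ K y ->
    exists P : {mpoly R[i][n]}, exists c : R[i],
      c < `|P.@[y]| /\ forall z : 'I_n -> R[i], K z -> `|P.@[z]| <= c.

(* A point y = (y_1, ..., y_(n-1), q) lies in the closure of G~_n exactly when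
   all its slices ((y_j + w y_(n-j)) / C(n, j), w q), for 0 < j < n and |w| = 1,
   lie in the closed symmetrized bidisc
     Gamma_2 = {(s, p) : |p| <= 1, |s| <= 2, |s - conj(s) p| <= 1 - |p|^2}
   of Agler and Young: slices of points of G~_n are of the form (g + conj(g) p, p)
   with |g| <= 1, and conversely the coefficients
   beta_j = (y_j - conj(y_(n-j)) q) / (1 - |q|^2) are bounded by the slice
   conditions (letting beta shrink radially gives approximations from G~_n).
   So a point outside the closure has a slice outside Gamma_2, and since slices
   are linear it suffices to separate points from Gamma_2 by polynomials.  The
   Agler-Young functions (2 w p - s) / (2 - w s), |w| < 1, have modulus at most 1
   on Gamma_2 and one of them has modulus > 1 at any other point with |p| <= 1,
   |s| <= 2; truncating the geometric series of 1 / (2 - w s) gives the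
   polynomial. *)

From mathcomp Require Import all_boot all_order all_algebra.
From mathcomp Require Import complex reals mpoly.
From mathcomp Require Import ring lra.
From Stdlib Require Import Classical.

Set Implicit Arguments.
Unset Strict Implicit.
Unset Printing Implicit Defensive.

Import Order.TTheory GRing.Theory Num.Theory ComplexField.Normc.
Local Open Scope ring_scope.
Local Notation "x %:C" := (x%:C)%C : ring_scope.

Section Modulus.
Variable R : rcfType.
Implicit Types (z w : R[i]) (a : R).

Lemma normcE z : `|z| = (normc z)%:C.
Proof. by case: z => a b; rewrite normc_def. Qed.

Lemma normc_ge0 z : 0 <= normc z.
Proof. by case: z => a b; exact: sqrtr_ge0. Qed.

Lemma normcJ z : normc z^* = normc z.
Proof. by apply: complexI; rewrite -!normcE norm_conjC. Qed.

Lemma normcX z k : normc (z ^+ k) = normc z ^+ k.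
Proof. by apply: complexI; rewrite rmorphXn -!normcE normrX. Qed.

Lemma normc_gt0 z : z != 0 -> 0 < normc z.
Proof. by move=> z0; rewrite lt_def normc_ge0 andbT; apply: contra z0 => /eqP/eq0_normc->. Qed.

Lemma normc_real a : normc a%:C = `|a|.
Proof. by rewrite /normc /= expr0n addr0 sqrtr_sqr. Qed.

Lemma normc_nat k : normc (k%:R : R[i]) = k%:R.
Proof. by rewrite -(rmorph_nat (real_complex R)) normc_real normr_nat. Qed.

Lemma normcK z : (normc z ^+ 2)%:C = z * z^*.
Proof. by rewrite -normCK normcE rmorphXn. Qed.

Lemma Re_le_normc z : complex.Re z <= normc z.
Proof.
have := normc_ge_Re z; rewrite normcE lecR; exact: le_trans (ler_norm _).
Qed.

Lemma Re_addJ z : (complex.Re z)%:C = (z + z^*) / 2.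
Proof. exact: ReJ_add. Qed.

Lemma lerB_normc z w : normc z - normc w <= normc (z - w).
Proof. by have := le_normcD (z - w) w; rewrite subrK; lra. Qed.

Lemma normc_eq1_neq0 w : normc w = 1 -> w != 0.
Proof. by move=> w1; apply/eqP => w0; move: w1; rewrite w0 normc0; lra. Qed.

Lemma normc_eq1_conj w : normc w = 1 -> w^* = w^-1.
Proof. by move=> w1; rewrite invC_norm normcE w1 expr1n invr1 mul1r. Qed.

Lemma exists_normc1_align z w :
  exists u, normc u = 1 /\ normc (z + u * w) = normc z + normc w.
Proof.
have [->|z0] := eqVneq z 0.
  by exists 1; rewrite normc1 mul1r add0r normc0 add0r.
have [->|w0] := eqVneq w 0.
  by exists 1; rewrite normc1 mulr0 addr0 normc0 addr0.
have nz := normc_gt0 z0; have nw := normc_gt0 w0.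
exists (z * w^* / (normc z * normc w)%:C); split.
  rewrite !normcM normcV normcJ normc_real ger0_norm ?mulr_ge0 ?normc_ge0 //.
  by rewrite mulfV // mulf_neq0 // gt_eqF.
have -> : z + z * w^* / (normc z * normc w)%:C * w = z * (1 + normc w / normc z)%:C.
  have ww : w^* * w = (normc w)%:C * (normc w)%:C.
    by rewrite mulrC -rmorphM /= -expr2 normcK.
  have [z0' w0'] : (normc z)%:C != 0 /\ (normc w)%:C != 0.
    by rewrite -[0 : R[i]]/(0%:C) !(inj_eq (@complexI R)) !gt_eqF.
  rewrite !(rmorphD, rmorph1, rmorphM, fmorphV) /=.
  rewrite [z * w^* / _ * w]mulrAC -[z * w^* * w]mulrA ww.
  by field; rewrite z0' w0'.
rewrite normcM normc_real ger0_norm; last by rewrite addr_ge0 ?divr_ge0 ?normc_ge0.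
by rewrite mulrDr mulr1 mulrC divfK // gt_eqF.
Qed.

End Modulus.

Section SymmetrizedBidisc.
Variable R : rcfType.
Implicit Types (s p w g : R[i]).

Definition Gamma2 s p : Prop :=
  [/\ normc p <= 1, normc s <= 2 & normc (s - s^* * p) <= 1 - normc p ^+ 2].

Lemma normc_1B_sqr p : normc p <= 1 ->
  normc (1 - (normc p ^+ 2)%:C) = 1 - normc p ^+ 2.
Proof.
move=> p1; have -> : 1 - (normc p ^+ 2)%:C = (1 - normc p ^+ 2)%:C.
  by rewrite rmorphB rmorph1.
rewrite normc_real ger0_norm //.
by have := normc_ge0 p; nra.
Qed.

Lemma Gamma2_param g p : normc g <= 1 -> normc p <= 1 -> Gamma2 (g + g^* * p) p.
Proof.
move=> g1 p1; have g0 := normc_ge0 g; have p0 := normc_ge0 p.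
split => //.
  by apply: le_trans (le_normcD _ _) _; rewrite normcM normcJ; nra.
have -> : g + g^* * p - (g + g^* * p)^* * p = g * (1 - (normc p ^+ 2)%:C).
  by rewrite normcK rmorphD rmorphM /= conjCK; ring.
rewrite normcM normc_1B_sqr // -[X in _ <= X]mul1r ler_wpM2r //; nra.
Qed.

Lemma Gamma2_normS s p : Gamma2 s p -> normc s <= 1 + normc p.
Proof.
case=> p1 s2 d1; have p0 := normc_ge0 p.
have [p_eq1|p_neq1] := eqVneq (normc p) 1; first lra.
have p_lt1 : normc p < 1 by rewrite lt_neqAle p_neq1.
have key : normc s * (1 - normc p ^+ 2) <= (1 + normc p) * (1 - normc p ^+ 2).
  rewrite -normc_1B_sqr // -normcM.
  have -> : s * (1 - (normc p ^+ 2)%:C) = (s - s^* * p) + (s - s^* * p)^* * p.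
    by rewrite normcK rmorphB rmorphM /= conjCK; ring.
  by apply: le_trans (le_normcD _ _) _; rewrite normcM normcJ normc_1B_sqr //; nra.
by rewrite -(ler_pM2r (_ : 0 < 1 - normc p ^+ 2)) //; nra.
Qed.

Lemma Gamma2_closed s p :
  (forall e, 0 < e -> exists s' p',
     [/\ Gamma2 s' p', normc (s - s') <= e & normc (p - p') <= e]) ->
  Gamma2 s p.
Proof.
move=> approx.
have le_8e (x y : R) : (forall e, 0 < e -> e <= 1 -> x <= y + 8 * e) -> x <= y.
  move=> h; apply/ler_addgt0Pr => e e0.
  have e'0 : 0 < Num.min 1 (e / 8) by rewrite lt_min ltr01 divr_gt0.
  have e'1 : Num.min 1 (e / 8) <= 1 by rewrite ge_min lexx.
  have e'e : Num.min 1 (e / 8) <= e / 8 by rewrite ge_min lexx orbT.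
  have := h _ e'0 e'1; lra.
suff near e : 0 < e -> e <= 1 -> [/\ normc p <= 1 + 8 * e, normc s <= 2 + 8 * e
    & normc (s - s^* * p) <= 1 - normc p ^+ 2 + 8 * e].
  by split; apply: le_8e => e e0 e1; case: (near e e0 e1).
move=> e0 e1; have [s' [p' [[p'1 s'2 d'] ds dp]]] := approx e e0.
have p_le : normc p <= normc p' + e by have := lerB_normc p p'; lra.
have s_le : normc s <= normc s' + e by have := lerB_normc s s'; lra.
split; [lra | lra |].
have -> : s - s^* * p = (s' - s'^* * p') + ((s - s') - ((s - s')^* * p + s'^* * (p - p'))).
  by rewrite rmorphB; ring.
apply: le_trans (le_normcD _ _) _.
have err : normc ((s - s') - ((s - s')^* * p + s'^* * (p - p'))) <= e + (e * (1 + e) + 2 * e).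
  apply: le_trans (le_normcD _ _) _; rewrite normcN; apply: lerD => //.
  apply: le_trans (le_normcD _ _) _; rewrite !normcM !normcJ.
  apply: lerD; apply: ler_pM; rewrite ?normc_ge0 //; lra.
have := normc_ge0 p; have := normc_ge0 p'; nra.
Qed.

Lemma normc_Phi_identity w s p :
  normc (2 - w * s) ^+ 2 - normc (2 * w * p - s) ^+ 2 =
  4 * (1 - normc w ^+ 2 * normc p ^+ 2) - normc s ^+ 2 * (1 - normc w ^+ 2)
    - 4 * complex.Re (w * (s - s^* * p)).
Proof.
apply: complexI; rewrite !(rmorphB, rmorphD, rmorphM, rmorph1, rmorph_nat) /=.
rewrite -!normcE -!expr2 !normCK Re_addJ !(rmorphB, rmorphD, rmorphM, rmorph1, rmorph_nat) /= conjCK.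
by field.
Qed.

Lemma Gamma2_Phi_le w s p : Gamma2 s p -> normc w < 1 ->
  normc (2 * w * p - s) <= normc (2 - w * s).
Proof.
move=> G2 w1; have S := Gamma2_normS G2; case: G2 => p1 s2 d1.
have X : complex.Re (w * (s - s^* * p)) <= normc w * normc (s - s^* * p).
  by rewrite -normcM Re_le_normc.
have w0 := normc_ge0 w; have p0 := normc_ge0 p; have s0 := normc_ge0 s.
have d0 := normc_ge0 (s - s^* * p).
have S2 : normc s ^+ 2 * (1 - normc w ^+ 2) <= (1 + normc p) ^+ 2 * (1 - normc w ^+ 2).
  by apply: ler_wpM2r; nra.
(* 4 (1 - u^2 r^2) - (1 + r)^2 (1 - u^2) - 4 u (1 - r^2)
   = (1 - r) (1 - u) (3 + r - u (1 + 3 r)), with u = |w| and r = |p|. *)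
have key : 0 <= (1 - normc p) * (1 - normc w) *
              ((3 + normc p) - normc w * (1 + 3 * normc p)).
  by apply: mulr_ge0; nra.
have := normc_Phi_identity w s p.
have := normc_ge0 (2 - w * s); have := normc_ge0 (2 * w * p - s); nra.
Qed.

Lemma notGamma2_Phi_gt s p : ~ Gamma2 s p -> normc p <= 1 -> normc s <= 2 ->
  exists w, normc w < 1 /\ normc (2 - w * s) < normc (2 * w * p - s).
Proof.
move=> nG2 p1 s2; set d := s - s^* * p.
have d_gt : 1 - normc p ^+ 2 < normc d by rewrite ltNge; apply/negP => d_le; apply: nG2.
have p0 := normc_ge0 p; have s0 := normc_ge0 s.
have d_pos : 0 < normc d by nra.
have d4 : normc d <= 4.
  by apply: le_trans (le_normcD _ _) _; rewrite normcN normcM normcJ; nra.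
(* g(t) := |2 - ws|^2 - |2wp - s|^2 for w = t d^*/|d| satisfies g(1) < 0 and
   g(t) <= g(1) + (1 - t)(8 + 4|d|); so t = 1 - h below makes g(t) < 0. *)
set h := (normc d - (1 - normc p ^+ 2)) / (2 * (normc d + 2)).
have hE : h * (2 * (normc d + 2)) = normc d - (1 - normc p ^+ 2).
  by rewrite /h mulfVK // gt_eqF //; nra.
have h0 : 0 < h by rewrite /h divr_gt0 //; nra.
have h1 : h <= 1 / 2 by nra.
pose w := ((1 - h) / normc d)%:C * d^*.
have w_norm : normc w = 1 - h.
  have t0 : 0 <= (1 - h) / normc d by rewrite divr_ge0 //; lra.
  by rewrite normcM normc_real normcJ ger0_norm // mulfVK // gt_eqF.
have w_Re : complex.Re (w * d) = (1 - h) * normc d.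
  rewrite -mulrA [d^* * d]mulrC -normcK -rmorphM /=.
  by rewrite expr2 mulrA divfK // gt_eqF.
exists w; rewrite w_norm; split; first lra.
have := normc_Phi_identity w s p; rewrite -/d w_norm w_Re.
have := normc_ge0 (2 - w * s); have := normc_ge0 (2 * w * p - s).
have e1 : 0 <= h * (2 - h) * normc s ^+ 2 by apply: mulr_ge0; nra.
have e2 : h * (2 - h) * normc p ^+ 2 <= h * 2 * 1 by apply: ler_pM; nra.
nra.
Qed.

(** The truncated geometric expansion of [2 * Phi_w(s, p)], where
    [Phi_w(s, p) = (2 w p - s) / (2 - w s)] is the Agler-Young function. *)
Definition Phi_trunc w N s p := (2 * w * p - s) * \sum_(k < N) (w / 2 * s) ^+ k.

Lemma Phi_truncE w N s p :
  Phi_trunc w N s p * (2 - w * s) = 2 * (2 * w * p - s) * (1 - (w / 2 * s) ^+ N).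
Proof.
rewrite /Phi_trunc; have := subrX1 (w / 2 * s) N.
set G := bigop.body _ _ _ => G_sum.
have -> : (w / 2 * s) ^+ N = 1 + (w / 2 * s - 1) * G by rewrite -G_sum; ring.
by field.
Qed.

Lemma normc_halfX_le w s N : normc s <= 2 -> normc ((w / 2 * s) ^+ N) <= normc w ^+ N.
Proof.
move=> s2; rewrite normcX !normcM normcV normc_nat.
apply: lerXn2r; rewrite ?nnegrE; have := normc_ge0 w; have := normc_ge0 s; nra.
Qed.

Lemma normc_2B_gt0 w s : normc w < 1 -> normc s <= 2 -> 0 < normc (2 - w * s).
Proof.
move=> w1 s2; have := lerB_normc 2 (w * s); rewrite normcM normc_nat.
have := normc_ge0 w; have := normc_ge0 s; nra.
Qed.

Lemma normc_Phi_trunc_le w N s p : normc w < 1 -> Gamma2 s p ->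
  normc (Phi_trunc w N s p) <= 2 * (1 + normc w ^+ N).
Proof.
move=> w1 G2; have le_Phi := Gamma2_Phi_le G2 w1; case: G2 => _ s2 _.
have B0 := normc_2B_gt0 w1 s2.
have err : normc (1 - (w / 2 * s) ^+ N) <= 1 + normc w ^+ N.
  apply: le_trans (le_normcD _ _) _; rewrite normcN normc1.
  by rewrite lerD2l normc_halfX_le.
rewrite -(ler_pM2r B0) -normcM Phi_truncE !normcM normc_nat.
have := normc_ge0 (2 * w * p - s); have := normc_ge0 (1 - (w / 2 * s) ^+ N).
nra.
Qed.

End SymmetrizedBidisc.

Lemma exists_exprn_lt (F : archiRealFieldType) (u e : F) :
  0 <= u -> u < 1 -> 0 < e -> exists N, u ^+ N < e.
Proof.
move=> u0 u1 e0.
have bernoulli N : u ^+ N * (1 + N%:R * (1 - u)) <= 1.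
  elim: N => [|N IH]; first by rewrite expr0 mul0r addr0 mulr1.
  have uN0 : 0 <= u ^+ N := exprn_ge0 N u0.
  have uN1 : u ^+ N.+1 <= 1 by apply: exprn_ile1 => //; exact: ltW.
  have : u * (u ^+ N * (1 + N%:R * (1 - u))) <= u.
    by rewrite -[X in _ <= X]mulr1 ler_wpM2l.
  rewrite exprS -natr1 in uN1 *; nra.
have d0 : 0 < e * (1 - u) by rewrite mulr_gt0 // subr_gt0.
have := archi_boundP (ltW (divr_gt0 ltr01 d0)); set N := Num.bound _ => N_gt.
exists N; have := bernoulli N; have := exprn_ge0 N u0.
have : 1 < N%:R * (e * (1 - u)) by rewrite -ltr_pdivrMr.
nra.
Qed.

Section PolyConvexGamma2.
Variable R : realType.
Implicit Types (s p w : R[i]).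

Definition poly_separates n (K : ('I_n -> R[i]) -> Prop) (y : 'I_n -> R[i]) : Prop :=
  exists (P : {mpoly R[i][n]}) (c : R[i]),
    c < `|P.@[y]| /\ forall z, K z -> `|P.@[z]| <= c.

Lemma poly_separates_comp k n (K : ('I_n -> R[i]) -> Prop)
    (K' : ('I_k -> R[i]) -> Prop) (f : k.-tuple {mpoly R[i][n]}) y :
  (forall z, K z -> K' (fun i => (tnth f i).@[z])) ->
  poly_separates K' (fun i => (tnth f i).@[y]) -> poly_separates K y.
Proof.
move=> fK [P [c [lt_y le_K]]]; exists (P \mPo f), c.
by rewrite !comp_mpoly_meval; split=> // z /fK; rewrite comp_mpoly_meval; exact: le_K.
Qed.

Lemma normc_Phi_trunc_gt w s p : normc w < 1 -> normc s <= 2 ->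
  normc (2 - w * s) < normc (2 * w * p - s) ->
  exists N, 2 * (1 + normc w ^+ N) < normc (Phi_trunc w N s p).
Proof.
move=> w1 s2; set A := normc (2 * w * p - s); set B := normc (2 - w * s) => BA.
have B0 : 0 < B := normc_2B_gt0 w1 s2.
have th0 : 0 < (A - B) / (A + B) by apply: divr_gt0; lra.
have [N wN] := exists_exprn_lt (normc_ge0 w) w1 th0.
exists N; have wN0 : 0 <= normc w ^+ N := exprn_ge0 N (normc_ge0 w).
have {}wN : normc w ^+ N * (A + B) < A - B by rewrite -ltr_pdivlMr //; lra.
have err : 1 - normc w ^+ N <= normc (1 - (w / 2 * s) ^+ N).
  by apply: le_trans (lerB_normc _ _); rewrite normc1 lerD2l lerN2 normc_halfX_le.
have := congr1 (@normc R) (Phi_truncE w N s p); rewrite !normcM normc_nat -/A -/B.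
have := normc_ge0 (Phi_trunc w N s p); nra.
Qed.

Lemma Gamma2_poly_convex :
  poly_convex (fun z : 'I_2 -> R[i] => Gamma2 (z ord0) (z ord_max)).
Proof.
move=> y nG2; set s0 := y ord0 in nG2; set p0 := y ord_max in nG2.
have sep_by (P : {mpoly R[i][2]}) (c : R) : c < normc P.@[y] ->
    (forall z, Gamma2 (z ord0) (z ord_max) -> normc P.@[z] <= c) ->
    poly_separates (fun z => Gamma2 (z ord0) (z ord_max)) y.
  move=> lt_y le_K; exists P, c%:C; rewrite normcE ltcR; split=> // z /le_K.
  by rewrite normcE lecR.
have [p0_gt1|p0_le1] := ltrP 1 (normc p0).
  by apply: (sep_by 'X_ord_max 1); rewrite ?mevalXU // => z []; rewrite mevalXU.
have [s0_gt2|s0_le2] := ltrP 2 (normc s0).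
  by apply: (sep_by 'X_ord0 2); rewrite ?mevalXU // => z []; rewrite mevalXU.
have [w [w1 Phi_gt1]] := notGamma2_Phi_gt nG2 p0_le1 s0_le2.
have [N trunc_gt] := normc_Phi_trunc_gt w1 s0_le2 Phi_gt1.
pose P : {mpoly R[i][2]} :=
  ((2 * w) *: 'X_ord_max - 'X_ord0) * \sum_(k < N) ((w / 2) *: 'X_ord0) ^+ k.
have PE z : P.@[z] = Phi_trunc w N (z ord0) (z ord_max).
  rewrite mevalM mevalB mevalZ !mevalXU raddf_sum; congr (_ * _).
  by apply: eq_bigr => k _; rewrite -[LHS]/(meval z _) rmorphXn /= mevalZ mevalXU.
apply: (sep_by P (2 * (1 + normc w ^+ N))); first by rewrite PE.
by move=> z G2; rewrite PE normc_Phi_trunc_le.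
Qed.

End PolyConvexGamma2.

Section GammaTilde.
Variables (R : realType) (m : nat).
Local Notation n := m.+1.
Implicit Types (z : 'I_n -> R[i]) (beta : nat -> R[i]) (q w : R[i]).

Definition ycoord z j : R[i] := z (inord j.-1).
Definition qcoord z : R[i] := z ord_max.

Definition slice_s z j w : R[i] :=
  ('C(n, j)%:R)^-1 * (ycoord z j + w * ycoord z (n - j)%N).
Definition slice_p z w : R[i] := w * qcoord z.

Definition slices_in_Gamma2 z : Prop :=
  forall j, (0 < j < n)%N -> forall w, normc w = 1 ->
    Gamma2 (slice_s z j w) (slice_p z w).

Definition slice_mpoly j w : 2.-tuple {mpoly R[i][n]} :=
  [tuple ('C(n, j)%:R)^-1 *: ('X_(inord j.-1) + w *: 'X_(inord (n - j)%N.-1));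
         w *: 'X_ord_max].

Lemma meval_slice_s z j w : (tnth (slice_mpoly j w) ord0).@[z] = slice_s z j w.
Proof. by rewrite /= mevalZ mevalD mevalZ !mevalXU. Qed.

Lemma meval_slice_p z j w : (tnth (slice_mpoly j w) ord_max).@[z] = slice_p z w.
Proof. by rewrite /= mevalZ mevalXU. Qed.

Definition gtilde_point beta q : 'I_n -> R[i] :=
  fun i => if i == m :> nat then q else beta i.+1 + (beta (n - i.+1)%N)^* * q.

Lemma ycoord_point beta q j : (0 < j < n)%N ->
  ycoord (gtilde_point beta q) j = beta j + (beta (n - j)%N)^* * q.
Proof.
case/andP=> j0 jn; have jm : (j.-1 < m)%N by rewrite -ltnS prednK.
by rewrite /ycoord /gtilde_point (inordK (ltnW jm)) (ltn_eqF jm) prednK.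
Qed.

Lemma qcoord_point beta q : qcoord (gtilde_point beta q) = q.
Proof. by rewrite /qcoord /gtilde_point /= eqxx. Qed.

Lemma binR_gt0 j : (j <= n)%N -> 0 < 'C(n, j)%:R :> R.
Proof. by move=> jn; rewrite ltr0n bin_gt0. Qed.

Lemma bin_neq0 j : (j <= n)%N -> 'C(n, j)%:R != 0 :> R[i].
Proof. by move=> jn; rewrite pnatr_eq0 -lt0n bin_gt0. Qed.

Lemma yindex_range (i : 'I_n) : i <> m :> nat -> (0 < i.+1 < n)%N.
Proof. by move=> im; rewrite ltnS ltn_neqAle (introN eqP im) -ltnS ltn_ord. Qed.

Lemma GtildeP z : Gtilde z <->
  exists beta q, [/\ normc q < 1,
    forall j, (0 < j < n)%N -> normc (beta j) + normc (beta (n - j)%N) < 'C(n, j)%:R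
    & z =1 gtilde_point beta q].
Proof.
have natC k : (k%:R : R[i]) = (k%:R : R)%:C by rewrite rmorph_nat.
split.
  case=> q [zq [q1 [beta zbeta]]]; exists beta, q; split.
  - by rewrite -ltcR -normcE.
  - move=> j jr; have [_] := zbeta j jr.
    by rewrite !normcE natC -rmorphD ltcR.
  - move=> i; rewrite /gtilde_point; case: eqP => [/zq //|im].
    by have [-> //] := zbeta _ (yindex_range im).
case=> beta [q [q1 bnd zE]]; exists q; split.
  by move=> i /= im; rewrite zE /gtilde_point im eqxx.
split; first by rewrite normcE ltcR.
exists beta => j jr; split; last by rewrite !normcE natC -rmorphD ltcR bnd.
move=> i ij; have := ycoord_point beta q jr.
by rewrite /ycoord -ij inord_val -zE.
Qed.

Lemma slices_point beta q : normc q <= 1 ->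
  (forall j, (0 < j < n)%N -> normc (beta j) + normc (beta (n - j)%N) <= 'C(n, j)%:R) ->
  slices_in_Gamma2 (gtilde_point beta q).
Proof.
move=> q1 bnd j jr w w1.
have jn : (j <= n)%N by case/andP: jr => _ /ltnW.
have jr' : (0 < n - j < n)%N.
  by case/andP: jr => j0 jn'; rewrite subn_gt0 jn' ltn_subrL j0.
set g := ('C(n, j)%:R)^-1 * (beta j + w * beta (n - j)%N).
have -> : slice_s (gtilde_point beta q) j w = g + g^* * slice_p (gtilde_point beta q) w.
  rewrite /slice_s /slice_p /g qcoord_point !ycoord_point // subKn //.
  rewrite !(rmorphM, rmorphD, fmorphV, rmorph_nat) /= (normc_eq1_conj w1).
  by field; rewrite bin_neq0 // normc_eq1_neq0.
apply: Gamma2_param; last by rewrite /slice_p normcM w1 mul1r qcoord_point.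
rewrite /g normcM normcV normc_nat ler_pdivrMl ?binR_gt0 // mulr1.
by apply: le_trans (le_normcD _ _) _; rewrite normcM w1 mul1r bnd.
Qed.

Lemma Gtilde_slices z : Gtilde z -> slices_in_Gamma2 z.
Proof.
case/GtildeP=> beta [q [q1 bnd zE]] j jr w w1.
have := slices_point (ltW q1) (fun j jr => ltW (bnd j jr)) jr w1.
by rewrite /slice_s /slice_p /ycoord /qcoord !zE.
Qed.

Lemma Gammatilde_slices z : Gammatilde z -> slices_in_Gamma2 z.
Proof.
move=> zG j jr w w1; apply: Gamma2_closed => e e0.
have e2 : 0 < (e / 2)%:C by rewrite ltcR; lra.
have [z' [z'G near]] := zG _ e2.
have near_k k : normc (z (inord k) - z' (inord k)) < e / 2.
  by rewrite -ltcR -normcE near.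
have jn : (j <= n)%N by case/andP: jr => _ /ltnW.
have C1 : 1 <= 'C(n, j)%:R :> R by rewrite ler1n bin_gt0.
exists (slice_s z' j w), (slice_p z' w); split.
- exact: Gtilde_slices.
- have -> : slice_s z j w - slice_s z' j w = ('C(n, j)%:R)^-1 *
      ((ycoord z j - ycoord z' j) + w * (ycoord z (n - j)%N - ycoord z' (n - j)%N)).
    by rewrite /slice_s; ring.
  rewrite normcM normcV normc_nat ler_pdivrMl ?binR_gt0 //.
  apply: le_trans (le_normcD _ _) _; rewrite normcM w1 mul1r.
  by have := near_k j.-1; have := near_k (n - j)%N.-1; nra.
- have -> : slice_p z w - slice_p z' w = w * (qcoord z - qcoord z') by rewrite /slice_p; ring.
  by rewrite normcM w1 mul1r /qcoord -(inord_val ord_max); have := near_k m; lra.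
Qed.

Lemma slices_qcoord_le1 z : (0 < m)%N -> slices_in_Gamma2 z -> normc (qcoord z) <= 1.
Proof.
move=> m0 zS; have [+ _ _] := zS 1%N (m0 : (0 < 1 < n)%N) 1 (normc1 R).
by rewrite /slice_p mul1r.
Qed.

Lemma slice_defect z j w : (j <= n)%N -> normc w = 1 ->
  'C(n, j)%:R * (slice_s z j w - (slice_s z j w)^* * slice_p z w) =
  (ycoord z j - (ycoord z (n - j)%N)^* * qcoord z)
    + w * (ycoord z (n - j)%N - (ycoord z j)^* * qcoord z).
Proof.
move=> jn w1.
rewrite /slice_s /slice_p !(rmorphM, rmorphD, fmorphV, rmorph_nat) /= (normc_eq1_conj w1).
by field; rewrite bin_neq0 // normc_eq1_neq0.
Qed.

(** When [|q| = 1] the slice conditions force [y_j = conj(y_(n-j)) q], so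
    [beta_j = y_j / 2] is an admissible choice. *)
Definition slice_beta z j : R[i] :=
  if normc (qcoord z) < 1 then
    (ycoord z j - (ycoord z (n - j)%N)^* * qcoord z) / (1 - qcoord z * (qcoord z)^*)
  else ycoord z j / 2.

Lemma slices_beta_interior z j : slices_in_Gamma2 z -> (0 < j < n)%N ->
  normc (qcoord z) < 1 ->
  ycoord z j = slice_beta z j + (slice_beta z (n - j)%N)^* * qcoord z /\
  normc (slice_beta z j) + normc (slice_beta z (n - j)%N) <= 'C(n, j)%:R.
Proof.
move=> zS jr q1; have jn : (j <= n)%N by case/andP: jr => _ /ltnW.
have q0 := normc_ge0 (qcoord z); have D_pos : 0 < 1 - normc (qcoord z) ^+ 2 by nra.
have DE : 1 - qcoord z * (qcoord z)^* = (1 - normc (qcoord z) ^+ 2)%:C.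
  by rewrite -normcK rmorphB rmorph1.
have D0 : 1 - qcoord z * (qcoord z)^* != 0.
  by rewrite DE -[0 : R[i]]/(0%:C) (inj_eq (@complexI R)) gt_eqF.
have [w [w1 <-]] := exists_normc1_align (slice_beta z j) (slice_beta z (n - j)%N).
have [_ _] := zS j jr w w1; rewrite /slice_p normcM w1 mul1r => defect_le.
have -> : slice_beta z j + w * slice_beta z (n - j)%N =
    'C(n, j)%:R * (slice_s z j w - (slice_s z j w)^* * slice_p z w)
    / (1 - qcoord z * (qcoord z)^*).
  by rewrite slice_defect // /slice_beta subKn // q1; field.
split.
  rewrite /slice_beta subKn // q1 !(rmorphM, rmorphB, fmorphV, rmorph1) /= !conjCK.
  by field; rewrite mulrC D0.
rewrite normcM normcV normcM normc_nat DE normc_real ger0_norm; last lra.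
rewrite ler_pdivrMr // ler_wpM2l //; exact: ltW (binR_gt0 jn).
Qed.

Lemma slices_beta_boundary z j : slices_in_Gamma2 z -> (0 < j < n)%N ->
  normc (qcoord z) = 1 ->
  ycoord z j = slice_beta z j + (slice_beta z (n - j)%N)^* * qcoord z /\
  normc (slice_beta z j) + normc (slice_beta z (n - j)%N) <= 'C(n, j)%:R.
Proof.
move=> zS jr q1; have jn : (j <= n)%N by case/andP: jr => _ /ltnW.
rewrite /slice_beta q1 ltxx.
set q := qcoord z; set yj := ycoord z j; set yk := ycoord z (n - j)%N.
have defect0 w : normc w = 1 -> (yj - yk^* * q) + w * (yk - yj^* * q) = 0.
  move=> w1; rewrite -slice_defect //.
  have [_ _] := zS j jr w w1; rewrite /slice_p normcM w1 mul1r q1 expr1n subrr => le0.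
  have -> : slice_s z j w - (slice_s z j w)^* * slice_p z w = 0.
    by apply/eq0_normc/le_anti; rewrite le0 normc_ge0.
  by rewrite mulr0.
have yjE : yj = yk^* * q.
  have : (yj - yk^* * q + 1 * (yk - yj^* * q))
         + (yj - yk^* * q + -1 * (yk - yj^* * q)) = (yj - yk^* * q) *+ 2 by ring.
  rewrite defect0 ?normc1 // defect0 ?normcN ?normc1 // addr0 => /esym/eqP.
  by rewrite mulrn_eq0 /= subr_eq0 => /eqP.
split.
  by rewrite !(rmorphM, fmorphV, rmorph_nat) /= yjE; field.
have [w [w1 align]] := exists_normc1_align yj yk.
have [_ s2 _] := zS j jr w w1.
rewrite /slice_s normcM normcV normc_nat align ler_pdivrMl ?binR_gt0 // in s2.
rewrite !normcM normcV normc_nat; lra.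
Qed.

Definition max_bin : nat := \max_(k < n.+1) 'C(n, k).

Lemma leq_bin_max j : (j <= n)%N -> ('C(n, j) <= max_bin)%N.
Proof.
by move=> jn; have := @leq_bigmax _ (fun k : 'I_n.+1 => 'C(n, k)) (inord j); rewrite inordK.
Qed.

Lemma max_bin_gt0 : (0 < max_bin)%N.
Proof. by rewrite (leq_trans _ (leq_bin_max (leq0n n))) // bin0. Qed.

Lemma normc_gtilde_point_shrink beta q r (i : 'I_n) : 0 <= r -> r <= 1 -> normc q <= 1 ->
  (forall j, (0 < j < n)%N -> normc (beta j) + normc (beta (n - j)%N) <= 'C(n, j)%:R) ->
  normc (gtilde_point beta q i - gtilde_point (fun j => r%:C * beta j) (r%:C * q) i)
    <= 2 * (1 - r) * max_bin%:R.
Proof.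
move=> r0 r1 q1 bnd; have K1 : 1 <= max_bin%:R :> R by rewrite ler1n max_bin_gt0.
rewrite /gtilde_point; case: eqP => im.
  have -> : q - r%:C * q = (1 - r)%:C * q by rewrite rmorphB rmorph1; ring.
  by rewrite normcM normc_real ger0_norm; nra.
have jr := yindex_range im; have Cb := bnd _ jr.
have CK : 'C(n, i.+1)%:R <= max_bin%:R :> R by rewrite ler_nat leq_bin_max.
have -> : beta i.+1 + (beta (n - i.+1)%N)^* * q
      - (r%:C * beta i.+1 + (r%:C * beta (n - i.+1)%N)^* * (r%:C * q)) =
    (1 - r)%:C * beta i.+1 + ((1 - r) * (1 + r))%:C * ((beta (n - i.+1)%N)^* * q).
  have rJ : (r%:C)^* = r%:C := conjc_real r.
  by rewrite rmorphM /= rJ !(rmorphB, rmorphM, rmorphD, rmorph1) /=; ring.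
apply: le_trans (le_normcD _ _) _.
rewrite !normcM !normc_real normcJ !ger0_norm; [|nra|lra].
set a := normc (beta i.+1) in Cb *; set b := normc (beta (n - i.+1)%N) in Cb *.
have a0 : 0 <= a := normc_ge0 _; have b0 : 0 <= b := normc_ge0 _.
have bq1 : b * normc q <= b by rewrite -[leRHS]mulr1 ler_wpM2l.
have bq : (1 + r) * (b * normc q) <= 2 * b.
  by have := mulr_ge0 b0 (normc_ge0 q); nra.
have : (1 - r) * ((1 + r) * (b * normc q)) <= (1 - r) * (2 * b) by rewrite ler_wpM2l //; lra.
have : (1 - r) * (a + 2 * b) <= (1 - r) * (2 * max_bin%:R) by rewrite ler_wpM2l //; lra.
rewrite -mulrA; nra.
Qed.

Lemma Gammatilde_point beta q : normc q <= 1 ->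
  (forall j, (0 < j < n)%N -> normc (beta j) + normc (beta (n - j)%N) <= 'C(n, j)%:R) ->
  Gammatilde (gtilde_point beta q).
Proof.
move=> q1 bnd eps eps0.
have [e [e0 ->]] : exists e : R, 0 < e /\ eps = e%:C.
  by case: eps eps0 => a b; rewrite ltcE /= => /andP [/eqP b0 a0]; exists a; rewrite b0.
have K1 : 1 <= max_bin%:R :> R by rewrite ler1n max_bin_gt0.
pose r := 4 * max_bin%:R / (4 * max_bin%:R + e).
have rE : r * (4 * max_bin%:R + e) = 4 * max_bin%:R by rewrite mulfVK // gt_eqF //; lra.
have r0 : 0 <= r by rewrite divr_ge0 //; lra.
have r1 : r < 1 by nra.
have normc_r x : normc (r%:C * x) = r * normc x by rewrite normcM normc_real ger0_norm.
exists (gtilde_point (fun j => r%:C * beta j) (r%:C * q)); split.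
  apply/GtildeP; exists (fun j => r%:C * beta j), (r%:C * q); split => //.
    by rewrite normc_r; nra.
  move=> j jr; rewrite !normc_r.
  have := bnd j jr; have := binR_gt0 (ltnW (proj2 (andP jr))); nra.
move=> i; rewrite normcE ltcR.
by apply: le_lt_trans (normc_gtilde_point_shrink i r0 (ltW r1) q1 bnd) _; nra.
Qed.

Lemma slices_Gammatilde z : (0 < m)%N -> slices_in_Gamma2 z -> Gammatilde z.
Proof.
move=> m0 zS; have q1 := slices_qcoord_le1 m0 zS.
have beta_ok j : (0 < j < n)%N ->
    ycoord z j = slice_beta z j + (slice_beta z (n - j)%N)^* * qcoord z /\
    normc (slice_beta z j) + normc (slice_beta z (n - j)%N) <= 'C(n, j)%:R.
  move=> jr; have [q_lt1|q_ge1] := ltrP (normc (qcoord z)) 1.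
    exact: slices_beta_interior.
  by apply: slices_beta_boundary => //; apply: le_anti; rewrite q1 q_ge1.
have zE : z =1 gtilde_point (slice_beta z) (qcoord z).
  move=> i; rewrite /gtilde_point; case: eqP => [im|im].
    by rewrite /qcoord; congr z; apply: val_inj.
  by have [<- _] := beta_ok _ (yindex_range im); rewrite /ycoord /= inord_val.
move=> eps /(Gammatilde_point q1 (fun j jr => proj2 (beta_ok j jr))) [z' [z'G near]].
by exists z'; split => // i; rewrite zE.
Qed.

End GammaTilde.

Theorem mainTheorem5 (R : realType) (n : nat) :
  (2 <= n)%N -> poly_convex (@Gammatilde R n).
Proof.
case: n => [|[|m]] // _ y y_out.
have [j jr [w w1 y_slice]] : exists2 j, (0 < j < m.+2)%N &
    exists2 w, normc w = 1 & ~ Gamma2 (slice_s y j w) (slice_p y w).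
  apply: NNPP => none; apply/y_out/slices_Gammatilde => // j jr w w1.
  by apply: NNPP => nG2; apply: none; exists j => //; exists w.
apply: (poly_separates_comp (K' := fun z => Gamma2 (z ord0) (z ord_max))
                            (f := @slice_mpoly R m.+1 j w)).
  by move=> z /Gammatilde_slices /(_ j jr w w1); rewrite meval_slice_s meval_slice_p.
by apply: Gamma2_poly_convex; rewrite meval_slice_s meval_slice_p.
Qed.
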